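(* Let $A,A_1,A_2,\ldots$ be band operators on $\ell^2(\mathbb{Z})$ such that $\sup_m\|A_m\|<\infty$ and the band-widths of $A$ and all $A_m$ are bounded by a common $w\in\mathbb{N}$. If \[ \forall N\in\mathbb{N}\ \exists m_0\in\mathbb{N}\ \forall m\ge m_0:\quad\mathcal{C}_N(A_m)=\mathcal{C}_N(A), \] then $\nu(A_m)\to\nu(A)$ and, in fact, $\nu(A_m-\lambda)\to\nu(A-\lambda)$ for every $\lambda\in\mathbb{C}$, as $m\to\infty$.
   Context: A band operator on $\ell^2(\mathbb{Z})$ with band-width at most $w$ is a bounded operator whose matrix entries satisfy $A_{ij}=0$ for $|i-j|>w$. The lower norm is $\nu(T):=\inf\{\|Tx\|:\|x\|=1\}$. For $N\in\mathbb{N}$, $\mathcal{C}_N(A)$ is the set of all $(N+2w)\times N$ matrices $C=(C_{ij})_{i\in1-w..N+w,\,j\in1..N}$ with $C_{ij}=A_{k+i,k+j}$ for some $k\in\mathbb{Z}$ (the ''$N$-column submatrices'' of $A$), where $a..b:=\{n\in\mathbb{Z}:a\le n\le b\}$. *)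

From HB Require Import structures.
From mathcomp Require Import all_boot all_order all_algebra.
From mathcomp Require Import all_classical all_reals.
From mathcomp Require Import all_analysis.
From mathcomp Require Import complex.
Set Implicit Arguments. Unset Strict Implicit. Unset Printing Implicit Defensive.
Import Order.TTheory GRing.Theory Num.Theory.
Local Open Scope ring_scope.
Local Open Scope classical_set_scope.

Definition csq (R : realType) (z : R[i]) : R := (complex.Re z) ^+ 2 + (complex.Im z) ^+ 2.

Definition sumsq (R : realType) (x : int -> R[i]) : \bar R :=
  (\esum_(i in [set: int]) (csq (x i))%:E)%E.
Definition in_l2 (R : realType) (x : int -> R[i]) : Prop := (sumsq x < +oo)%E.
Definition l2norm (R : realType) (x : int -> R[i]) : R := Num.sqrt (fine (sumsq x)).

Definition bandwidth_le (R : realType) (a : int -> int -> R[i]) (w : nat) : Prop :=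
  forall i j : int, (w < `|i - j|)%N -> a i j = 0.

Definition band_apply (R : realType) (w : nat) (a : int -> int -> R[i]) (x : int -> R[i]) : int -> R[i] :=
  fun i => \sum_(k < (2 * w).+1) a i (i - w%:Z + k%:Z) * x (i - w%:Z + k%:Z).

Definition op_norm_le (R : realType) (w : nat) (a : int -> int -> R[i]) (M : R) : Prop :=
  forall x, in_l2 x -> in_l2 (band_apply w a x) /\ l2norm (band_apply w a x) <= M * l2norm x.

Definition bounded_op (R : realType) (w : nat) (a : int -> int -> R[i]) : Prop :=
  exists M : R, op_norm_le w a M.

Definition is_band (R : realType) (w : nat) (a : int -> int -> R[i]) : Prop :=
  bandwidth_le a w /\ bounded_op w a.

Definition lower_norm (R : realType) (w : nat) (a : int -> int -> R[i]) : R :=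
  inf [set l2norm (band_apply w a x) | x in [set x | in_l2 x /\ l2norm x = 1]].

Definition minus_scalar (R : realType) (a : int -> int -> R[i]) (lam : R[i]) : int -> int -> R[i] :=
  fun i j => a i j - (if i == j then lam else 0).

(* N-column submatrix at offset k: rows i in 1-w..N+w, columns j in 1..N;
   row index r : 'I_(N+2w) stands for i = r + 1 - w, column c : 'I_N for j = c + 1. *)
Definition colsubmx (R : realType) (w N : nat) (a : int -> int -> R[i]) (k : int)
  : 'M[R[i]]_(N + 2 * w, N) :=
  \matrix_(r < N + 2 * w, c < N) a (k + (r%:Z + 1 - w%:Z)) (k + (c%:Z + 1)).

Definition CN (R : realType) (w N : nat) (a : int -> int -> R[i]) : set 'M[R[i]]_(N + 2 * w, N) :=
  [set colsubmx w N a k | k in [set: int]].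

Arguments colsubmx {R} w N a k.
Arguments CN {R} w N a.

(* Take a unit vector x with ||b1 x|| close to nu(b1) and truncate it to a finite window.
   Cutting it off to the translates of a window of length N, the squared norms of the pieces add
   up to N ||x||^2 while those of their images add up to at most
   (1 + d) N ||b1 x||^2 + O((1 + 1/d) ||x||^2): a band operator commutes with a cut-off up to an
   error near the two endpoints of the window, and each row is near an endpoint of only O(w)
   translates. So some piece z, supported in one window of length N, has
   ||b1 z||^2 <= (||b1 x||^2 + O(eps)) ||z||^2. On such a z the operator acts only through a
   single N-column submatrix; if that submatrix also occurs in b2, a translate of z shows
   nu(b2) <= nu(b1) + eps, where N depends only on eps, w and a bound on the entries. Equal sets
   C_N(A_m) = C_N(A) (which persist after subtracting lambda) give this in both directions, and
   the uniform operator-norm bound gives the uniform entry bound. *)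

From HB Require Import structures.
From mathcomp Require Import all_boot all_order all_algebra.
From mathcomp Require Import all_classical all_reals.
From mathcomp Require Import all_analysis.
From mathcomp Require Import complex.
From mathcomp Require Import zify ring lra.
Set Implicit Arguments. Unset Strict Implicit. Unset Printing Implicit Defensive.
Import Order.TTheory GRing.Theory Num.Theory numFieldNormedType.Exports.
Local Open Scope ring_scope.
Local Open Scope classical_set_scope.

Section SquaredModulus.
Variable R : realType.
Implicit Types (u v z : R[i]).

Lemma csq_ge0 z : 0 <= csq z.
Proof. by rewrite /csq addr_ge0 // sqr_ge0. Qed.

Lemma csq0 : csq (0 : R[i]) = 0.
Proof. by rewrite /csq /= expr0n /= addr0. Qed.

Lemma csqM u v : csq (u * v) = csq u * csq v.
Proof. by case: u => a b; case: v => c d; rewrite /csq /=; ring. Qed.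

Lemma csqN u : csq (- u) = csq u.
Proof. by case: u => a b; rewrite /csq /=; ring. Qed.

Lemma csq_bool (b : bool) : csq (b%:R : R[i]) = b%:R.
Proof. by case: b; rewrite /csq /= ?expr1n ?expr0n /= ?addr0. Qed.

Lemma csq_boolB (b1 b2 : bool) : csq ((b1%:R : R[i]) - b2%:R) = (b1 != b2)%:R.
Proof. by case: b1; case: b2; rewrite /csq /= ?subrr ?sub0r ?subr0 /=; ring. Qed.

Lemma csq_realM (r : R) u : csq (r%:C%C * u) = r ^+ 2 * csq u.
Proof. by case: u => a b; rewrite /csq /=; ring. Qed.

Lemma csqD_le u v (d : R) : 0 < d ->
  csq (u + v) <= (1 + d) * csq u + (1 + d^-1) * csq v.
Proof.
move=> d0; case: u => a b; case: v => c e; rewrite /csq /= -subr_ge0.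
have -> : (1 + d) * (a ^+ 2 + b ^+ 2) + (1 + d^-1) * (c ^+ 2 + e ^+ 2) -
    ((a + c) ^+ 2 + (b + e) ^+ 2) = d^-1 * ((d * a - c) ^+ 2 + (d * b - e) ^+ 2).
  by field; rewrite gt_eqF.
by apply: mulr_ge0; [rewrite invr_ge0 ltW | rewrite addr_ge0 // sqr_ge0].
Qed.

Lemma csq_sum_le n (z : 'I_n -> R[i]) :
  csq (\sum_(k < n) z k) <= n%:R * \sum_(k < n) csq (z k).
Proof.
elim: n z => [|n IH] z; first by rewrite !big_ord0 csq0 mul0r.
rewrite !big_ord_recr /=.
case: n IH z => [|n] IH z; first by rewrite !big_ord0 !add0r mul1r.
set S := \sum_(k < n.+1) z _; set T := \sum_(k < n.+1) csq _.
have n0 : (0 : R) < n.+1%:R by rewrite ltr0n.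
have n0' : (0 : R) < n.+1%:R^-1 by rewrite invr_gt0.
apply: le_trans (csqD_le S (z ord_max) n0') _.
rewrite invrK [n.+2%:R * _]mulrDr; apply: lerD.
  have IHz := IH (fun k => z (widen_ord (leqnSn n.+1) k)).
  apply: le_trans (ler_wpM2l (addr_ge0 ler01 (ltW n0')) IHz) _.
  by rewrite mulrA mulrDl mul1r mulVf ?gt_eqF // natr1 -/T.
by rewrite addrC natr1.
Qed.

End SquaredModulus.

(** * Sums over finite windows *)

Definition in_window (lo : int) (n : nat) (i : int) : bool := (lo <= i) && (i < lo + n%:Z).

Lemma in_window_ord lo n (k : 'I_n) : in_window lo n (lo + k%:Z).
Proof. by have := ltn_ord k; rewrite /in_window => h; apply/andP; split; lia. Qed.

Lemma in_window_band_change (t i : int) (N w k : nat) : (k <= 2 * w)%N ->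
  in_window t N (i - w%:Z + k%:Z) != in_window t N i ->
  in_window t (2 * w).+1 (i + w%:Z) || in_window (t + N%:Z) (2 * w).+1 (i + w%:Z).
Proof.
rewrite /in_window => hk.
case: (boolP (t <= i - w%:Z + k%:Z)); case: (boolP (i - w%:Z + k%:Z < t + N%:Z));
case: (boolP (t <= i)); case: (boolP (i < t + N%:Z)) => //= *;
apply/orP; (try (left; apply/andP; split; lia)); (try (right; apply/andP; split; lia)).
Qed.

(* The number of endpoints t, t + N of the window [t, t + N) at distance at most w from i. *)
Definition edge (w : nat) (t : int) (N : nat) (i : int) : nat :=
  in_window t (2 * w).+1 (i + w%:Z) + in_window (t + N%:Z) (2 * w).+1 (i + w%:Z).

Lemma count_windows (t0 p : int) (T d : nat) :
  (\sum_(k < T) (in_window (t0 + k%:Z) d p : nat))%N =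
  if p < t0 then 0%N else (minn T `|p - t0|.+1 - minn T (`|p - t0|.+1 - d))%N.
Proof.
elim: T => [|T IH]; first by rewrite big_ord0; case: ifP.
rewrite big_ord_recr /= IH /in_window.
case: (boolP ((t0 + T%:Z <= p) && (p < t0 + T%:Z + d%:Z))) => h.
  by move/andP: h => [h1 h2]; case: ifP => h3; lia.
case: ifP => h3 //=; rewrite addn0.
by move/negP: h => h; apply/eqP; rewrite eqn_leq; apply/andP; split; lia.
Qed.

Section WindowSums.
Variable R : realType.
Implicit Types (f : int -> R).

Definition wsum f (lo : int) (n : nat) : R := \sum_(k < n) f (lo + k%:Z).

Definition wrestr f lo n : int -> R := fun i => if in_window lo n i then f i else 0.

Lemma sum_window_indicator_le (t0 p : int) (T d : nat) :
  \sum_(k < T) ((in_window (t0 + k%:Z) d p)%:R : R) <= d%:R.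
Proof. by rewrite -natr_sum ler_nat count_windows; case: ifP => _; lia. Qed.

Lemma sum_window_indicator_eq (t0 p : int) (T d : nat) :
  t0 + d%:Z - 1 <= p -> p < t0 + T%:Z ->
  \sum_(k < T) ((in_window (t0 + k%:Z) d p)%:R : R) = d%:R.
Proof.
move=> h1 h2; rewrite -natr_sum count_windows; congr (_%:R); case: ifP => h3; first lia.
by apply/eqP; rewrite eqn_leq; apply/andP; split; lia.
Qed.

Lemma wrestr_ge0 f lo n i : (forall i, 0 <= f i) -> 0 <= wrestr f lo n i.
Proof. by move=> f0; rewrite /wrestr; case: ifP. Qed.

Lemma wsum_wrestr f lo n : wsum (wrestr f lo n) lo n = wsum f lo n.
Proof. by apply: eq_bigr => k _; rewrite /wrestr in_window_ord. Qed.

Lemma esum_window f lo n : (forall i, 0 <= f i) ->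
  (forall i, ~~ in_window lo n i -> f i = 0) ->
  (\esum_(i in [set: int]) (f i)%:E)%E = (wsum f lo n)%:E.
Proof.
move=> f0 fout.
have -> : (\esum_(i in [set: int]) (f i)%:E)%E =
    (\esum_(i in [set i | in_window lo n i]) (f i)%:E)%E.
  rewrite [RHS]esum_mkcond; apply: eq_esum => i _.
  by case: ifPn => // /negP hi; rewrite fout //; apply/negP => h; apply: hi; rewrite inE.
rewrite (reindex_esum [set k : nat | (k < n)%N] _ (fun k : nat => lo + k%:Z)); last first.
  split.
  - by move=> k /= kn; rewrite /in_window; apply/andP; split; lia.
  - by move=> a b _ _; lia.
  - by move=> i /= /andP[h1 h2]; exists `|i - lo|%N => /=; lia.
rewrite esum_fset //; last by move=> i _; rewrite lee_fin.
by rewrite -fsbig_ord -sumEFin.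
Qed.

Lemma esum_wrestr f lo n : (forall i, 0 <= f i) ->
  (\esum_(i in [set: int]) (wrestr f lo n i)%:E)%E = (wsum f lo n)%:E.
Proof.
move=> f0; rewrite -wsum_wrestr; apply: esum_window => [i|i hi]; first exact: wrestr_ge0.
by rewrite /wrestr (negbTE hi).
Qed.

Lemma wsum_window_eq f lo n lo' n' : (forall i, 0 <= f i) ->
  (forall i, ~~ in_window lo n i -> f i = 0) ->
  (forall i, ~~ in_window lo' n' i -> f i = 0) ->
  wsum f lo n = wsum f lo' n'.
Proof.
by move=> f0 h1 h2; apply: EFin_inj; rewrite -(esum_window f0 h1) -(esum_window f0 h2).
Qed.

Lemma wsum_le_window f lo n lo' n' : (forall i, 0 <= f i) ->
  (forall i, in_window lo n i -> in_window lo' n' i) ->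
  wsum f lo n <= wsum f lo' n'.
Proof.
move=> f0 sub; rewrite -wsum_wrestr.
have g0 i : 0 <= wrestr f lo n i by exact: wrestr_ge0.
rewrite (@wsum_window_eq _ lo n lo' n' g0) => [||i]; first last.
- by rewrite /wrestr; case: ifP => // /sub ->.
- by move=> i; rewrite /wrestr => /negbTE ->.
by apply: ler_sum => k _; rewrite /wrestr; case: ifP.
Qed.

Lemma wsum_le_esum f lo n : (forall i, 0 <= f i) ->
  ((wsum f lo n)%:E <= \esum_(i in [set: int]) (f i)%:E)%E.
Proof.
move=> f0; rewrite -esum_wrestr //.
by apply: le_esum => i _; rewrite lee_fin /wrestr; case: ifP.
Qed.

Lemma finite_set_window (F : set int) : finite_set F ->
  exists M : nat, forall i, F i -> in_window (- M%:Z) (2 * M).+1 i.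
Proof.
move=> finF; set M := \max_(i <- finmap.enum_fset (fset_set F)) `|i|%N.
exists M => i Fi.
have : (`|i| <= M)%N.
  by apply: (@leq_bigmax_seq _ _ xpredT (fun i : int => `|i|%N)); rewrite ?in_fset_set // inE.
by rewrite /in_window => hM; apply/andP; split; lia.
Qed.

Lemma fsbig_le_wsum f lo n (F : set int) : (forall i, 0 <= f i) ->
  finite_set F -> (forall i, F i -> in_window lo n i) ->
  (\sum_(i \in F) (f i)%:E <= (wsum f lo n)%:E)%E.
Proof.
move=> f0 finF sub.
rewrite -esum_fset //; last by move=> i _; rewrite lee_fin.
rewrite -esum_wrestr // esum_mkcond; apply: le_esum => i _.
case: ifPn => [iF|_]; last by rewrite lee_fin wrestr_ge0.
by rewrite /wrestr sub //; rewrite inE in iF.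
Qed.

Lemma esum_le_of_wsum_le f (C : R) : (forall i, 0 <= f i) ->
  (forall lo n, wsum f lo n <= C) -> (\esum_(i in [set: int]) (f i)%:E <= C%:E)%E.
Proof.
move=> f0 hC; apply: ge_ereal_sup => _ [F [finF _] <-].
have [M hM] := finite_set_window finF.
by apply: le_trans (fsbig_le_wsum f0 finF hM) _; rewrite lee_fin.
Qed.

End WindowSums.

Section SquareSummable.
Variable R : realType.
Implicit Types (x : int -> R[i]).

Definition sqmod x : int -> R := fun i => csq (x i).
(* [fine] sends +oo to 0: [sqnorm x] is the squared norm only for x in l^2. *)
Definition sqnorm x : R := fine (sumsq x).
Definition supported x lo n := forall i, ~~ in_window lo n i -> x i = 0.

Lemma sqmod_ge0 x i : 0 <= sqmod x i.
Proof. exact: csq_ge0. Qed.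

Lemma sumsq_ge0 x : (0 <= sumsq x)%E.
Proof. by apply: esum_ge0 => i _; rewrite lee_fin csq_ge0. Qed.

Lemma sumsq_sqnorm x : in_l2 x -> sumsq x = (sqnorm x)%:E.
Proof.
move=> hx; rewrite /sqnorm fineK //; apply/fin_numP; split.
  by apply/negP => /eqP h; have := sumsq_ge0 x; rewrite h.
by apply/negP => /eqP h; move: hx; rewrite /in_l2 h ltxx.
Qed.

Lemma sqnorm_ge0 x : 0 <= sqnorm x.
Proof. by rewrite /sqnorm fine_ge0 // sumsq_ge0. Qed.

Lemma l2norm_ge0 x : 0 <= l2norm x.
Proof. exact: sqrtr_ge0. Qed.

Lemma sqnorm_l2norm x : sqnorm x = l2norm x ^+ 2.
Proof. by rewrite /l2norm sqr_sqrtr // sqnorm_ge0. Qed.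

Lemma wsum_le_sqnorm x lo n : in_l2 x -> wsum (sqmod x) lo n <= sqnorm x.
Proof. by move=> hx; rewrite -lee_fin -sumsq_sqnorm //; apply: wsum_le_esum; exact: sqmod_ge0. Qed.

Lemma supported_sqmod x lo n i : supported x lo n -> ~~ in_window lo n i -> sqmod x i = 0.
Proof. by move=> hs hi; rewrite /sqmod hs // csq0. Qed.

Lemma sumsq_supported x lo n : supported x lo n -> sumsq x = (wsum (sqmod x) lo n)%:E.
Proof.
by move=> hs; apply: esum_window => i; [exact: sqmod_ge0 | exact: supported_sqmod].
Qed.

Lemma supported_in_l2 x lo n : supported x lo n -> in_l2 x.
Proof. by move=> hs; rewrite /in_l2 (sumsq_supported hs) ltry. Qed.

Lemma sqnorm_supported x lo n : supported x lo n -> sqnorm x = wsum (sqmod x) lo n.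
Proof. by move=> hs; rewrite /sqnorm (sumsq_supported hs). Qed.

End SquareSummable.

(** * Band operators and cut-offs *)

Section BandOperator.
Variables (R : realType) (w : nat) (a : int -> int -> R[i]) (K : R).
Hypothesis csq_entry_le : forall i j, csq (a i j) <= K.
Implicit Types (x : int -> R[i]).

Lemma entry_bound_ge0 : 0 <= K.
Proof. exact: le_trans (csq_ge0 (a 0 0)) (csq_entry_le 0 0). Qed.

Definition band_mass x (i : int) : R := \sum_(k < (2 * w).+1) sqmod x (i - w%:Z + k%:Z).

Lemma band_mass_ge0 x i : 0 <= band_mass x i.
Proof. by apply: sumr_ge0 => k _; exact: sqmod_ge0. Qed.

Lemma csq_band_apply_le x i : csq (band_apply w a x i) <= (2 * w).+1%:R * K * band_mass x i.
Proof.
rewrite /band_apply -mulrA; apply: le_trans (csq_sum_le _) _; apply: ler_wpM2l => //.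
rewrite /band_mass mulr_sumr; apply: ler_sum => k _; rewrite csqM.
by apply: ler_wpM2r; [exact: csq_ge0 | exact: csq_entry_le].
Qed.

Lemma wsum_band_mass_le x lo n : in_l2 x -> wsum (band_mass x) lo n <= (2 * w).+1%:R * sqnorm x.
Proof.
move=> hx; rewrite /wsum /band_mass exchange_big /=.
apply: le_trans (_ : _ <= \sum_(k < (2 * w).+1) sqnorm x) _.
  apply: ler_sum => k _; apply: le_trans (wsum_le_sqnorm (lo - w%:Z + k%:Z) n hx).
  by rewrite le_eqVlt; apply/orP; left; apply/eqP/eq_bigr => j _; congr sqmod; ring.
by rewrite sumr_const card_ord mulr_natl.
Qed.

Lemma band_apply_l2 x : in_l2 x ->
  in_l2 (band_apply w a x) /\ sqnorm (band_apply w a x) <= (2 * w).+1%:R ^+ 2 * K * sqnorm x.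
Proof.
move=> hx.
have C0 : 0 <= (2 * w).+1%:R * K by rewrite mulr_ge0 // entry_bound_ge0.
have h : (sumsq (band_apply w a x) <= ((2 * w).+1%:R ^+ 2 * K * sqnorm x)%:E)%E.
  apply: esum_le_of_wsum_le => [i|lo n]; first exact: csq_ge0.
  apply: le_trans (ler_sum _ (fun k _ => csq_band_apply_le x _)) _.
  rewrite -mulr_sumr; apply: le_trans (ler_wpM2l C0 (wsum_band_mass_le lo n hx)) _.
  by rewrite expr2 -!mulrA (mulrCA K).
have hl : in_l2 (band_apply w a x) by rewrite /in_l2; apply: le_lt_trans h _; rewrite ltry.
by split => //; rewrite -lee_fin -sumsq_sqnorm.
Qed.

Lemma band_apply_supported x lo n :
  supported x lo n -> supported (band_apply w a x) (lo - w%:Z) (n + 2 * w).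
Proof.
move=> hs i hi; rewrite /band_apply big1 // => k _; rewrite hs ?mulr0 //.
move: hi; rewrite /in_window; have := ltn_ord k; move: (nat_of_ord k) => kk hk.
by case: (boolP (lo - w%:Z <= i)) => /= h1 h2; apply/negP => /andP[h3 h4]; lia.
Qed.

Definition cutoff t N x : int -> R[i] := fun j => (in_window t N j)%:R * x j.

Lemma sqmod_cutoff t N x j : sqmod (cutoff t N x) j = (in_window t N j)%:R * sqmod x j.
Proof. by rewrite /sqmod /cutoff csqM csq_bool. Qed.

Lemma cutoff_supported t N x : supported (cutoff t N x) t N.
Proof. by move=> i hi; rewrite /cutoff (negbTE hi) mul0r. Qed.

Lemma cutoff_supported_in t N x lo n : supported x lo n -> supported (cutoff t N x) lo n.
Proof. by move=> hs i hi; rewrite /cutoff hs ?mulr0. Qed.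

(* Row i of the commutator of [a] with the cut-off vanishes unless [edge w t N i] is nonzero. *)
Lemma csq_band_apply_cutoff_le (d : R) t N x i : 0 < d ->
  csq (band_apply w a (cutoff t N x) i) <=
  (1 + d) * ((in_window t N i)%:R * sqmod (band_apply w a x) i) +
  (1 + d^-1) * ((2 * w).+1%:R * K * ((edge w t N i)%:R * band_mass x i)).
Proof.
move=> d0.
have -> : band_apply w a (cutoff t N x) i = (in_window t N i)%:R * band_apply w a x i +
    \sum_(k < (2 * w).+1) a i (i - w%:Z + k%:Z) *
      ((in_window t N (i - w%:Z + k%:Z))%:R - (in_window t N i)%:R) * x (i - w%:Z + k%:Z).
  by rewrite /band_apply mulr_sumr -big_split; apply: eq_bigr => k _; rewrite /cutoff /=; ring.
apply: le_trans (csqD_le _ _ d0) _; apply: lerD.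
  by apply: ler_wpM2l; [rewrite addr_ge0 // ltW | rewrite csqM csq_bool].
apply: ler_wpM2l; first by rewrite addr_ge0 // invr_ge0 ltW.
apply: le_trans (csq_sum_le _) _; rewrite -mulrA; apply: ler_wpM2l => //.
rewrite /band_mass !mulr_sumr; apply: ler_sum => k _; rewrite !csqM csq_boolB.
rewrite /sqmod mulrA; apply: ler_wpM2r; first exact: csq_ge0.
apply: ler_pM => //; first exact: csq_ge0.
case: (boolP (in_window t N (i - w%:Z + k%:Z) != in_window t N i)) => h //=.
have := in_window_band_change (ltn_ord k) h; rewrite ler1n /edge.
by case: (in_window t _ _); case: (in_window (t + _) _ _).
Qed.

Lemma wsum_band_apply_cutoff_le (d : R) t N x lo n : 0 < d ->
  wsum (sqmod (band_apply w a (cutoff t N x))) lo n <=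
  (1 + d) * wsum (fun i => (in_window t N i)%:R * sqmod (band_apply w a x) i) lo n +
  (1 + d^-1) * ((2 * w).+1%:R * K) * wsum (fun i => (edge w t N i)%:R * band_mass x i) lo n.
Proof.
move=> d0; rewrite /wsum !mulr_sumr -big_split; apply: ler_sum => k _.
by rewrite -mulrA; exact: csq_band_apply_cutoff_le.
Qed.

End BandOperator.

(** * Lower norms and test vectors *)

Definition unit_sphere {R : realType} : set (int -> R[i]) := [set x | in_l2 x /\ l2norm x = 1].

Definition basis_vec {R : realType} (j : int) : int -> R[i] := fun l => (l == j)%:R.

Section LowerNorm.
Variable R : realType.
Implicit Types (x y : int -> R[i]) (a b : int -> int -> R[i]).

Lemma basis_vec_supported j : supported (basis_vec j : int -> R[i]) j 1.
Proof.
move=> i; rewrite /basis_vec /in_window; case: eqP => // ->.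
by rewrite lexx /= ltrDl ltr01.
Qed.

Lemma basis_vec_unit j : unit_sphere (basis_vec j : int -> R[i]).
Proof.
have hj : supported (basis_vec j : int -> R[i]) j 1 := @basis_vec_supported j.
split; first exact: supported_in_l2 hj.
rewrite /l2norm -/(sqnorm _) (sqnorm_supported hj).
by rewrite /wsum big_ord1 addr0 /sqmod /basis_vec eqxx csq_bool sqrtr1.
Qed.

Let lower_norm_set w a := [set l2norm (band_apply w a x) | x in unit_sphere].

Lemma lower_norm_set_lb w a : has_lbound (lower_norm_set w a).
Proof. by exists 0 => _ [x _ <-]; exact: l2norm_ge0. Qed.

Lemma lower_norm_set_nonempty w a : nonempty (lower_norm_set w a).
Proof.
by exists (l2norm (band_apply w a (basis_vec 0))), (basis_vec 0); first exact: basis_vec_unit.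
Qed.

Lemma lower_norm_le w a x : unit_sphere x -> lower_norm w a <= l2norm (band_apply w a x).
Proof. by move=> hx; apply: ge_inf; [exact: lower_norm_set_lb | exists x]. Qed.

Lemma lower_norm_adherent w a (e : R) : 0 < e ->
  exists x, unit_sphere x /\ l2norm (band_apply w a x) < lower_norm w a + e.
Proof.
move=> e0; have [_ [x hx <-] h] := inf_adherent e0
  (conj (lower_norm_set_nonempty w a) (lower_norm_set_lb w a)).
by exists x.
Qed.

Lemma band_apply_scale w a (s : R) x :
  band_apply w a (fun j => s%:C%C * x j) = fun i => s%:C%C * band_apply w a x i.
Proof.
by apply: funext => i; rewrite /band_apply mulr_sumr; apply: eq_bigr => k _; rewrite mulrCA.
Qed.

Lemma sqnorm_scale_supported (s : R) x lo n : supported x lo n ->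
  sqnorm (fun j => s%:C%C * x j) = s ^+ 2 * sqnorm x.
Proof.
move=> hs; have hsx : supported (fun j => s%:C%C * x j) lo n by move=> i /hs ->; rewrite mulr0.
rewrite (sqnorm_supported hs) (sqnorm_supported hsx) /wsum mulr_sumr.
by apply: eq_bigr => k _; rewrite /sqmod csq_realM.
Qed.

Definition window_test w a x lo n (c : R) :=
  [/\ supported x lo n, 0 < sqnorm x & sqnorm (band_apply w a x) <= c * sqnorm x].

Lemma window_test_le w a x lo n (c c' : R) : c <= c' ->
  window_test w a x lo n c -> window_test w a x lo n c'.
Proof.
move=> cc' [hs hx hc]; split => //; apply: le_trans hc _.
by rewrite ler_wpM2r // ltW.
Qed.

Lemma lower_norm_le_window_test w a x lo n (c : R) :
  window_test w a x lo n c -> lower_norm w a <= Num.sqrt c.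
Proof.
move=> [hs S0 hc]; set s := (Num.sqrt (sqnorm x))^-1.
have s2S : s ^+ 2 * sqnorm x = 1 by rewrite exprVn sqr_sqrtr ?mulVf ?gt_eqF // ltW.
have c0 : 0 <= c by rewrite -(pmulr_lge0 _ S0); exact: le_trans (sqnorm_ge0 _) hc.
have hsb : supported (band_apply w a x) _ _ := band_apply_supported a hs.
have hsx : supported (fun j => s%:C%C * x j) lo n by move=> i /hs ->; rewrite mulr0.
have ux : unit_sphere (fun j => s%:C%C * x j).
  split; first exact: supported_in_l2 hsx.
  by rewrite /l2norm -/(sqnorm _) (sqnorm_scale_supported _ hs) s2S sqrtr1.
apply: le_trans (lower_norm_le w a ux) _.
rewrite /l2norm -/(sqnorm _) band_apply_scale (sqnorm_scale_supported _ hsb) ler_sqrt //.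
rewrite -[X in _ <= X]mulr1 -s2S mulrCA; apply: ler_wpM2l => //; exact: sqr_ge0.
Qed.

End LowerNorm.

Section ColumnSubmatrices.
Variables (R : realType) (w N : nat).
Implicit Types (x : int -> R[i]) (a b : int -> int -> R[i]).

Lemma band_apply_colsubmx_eq b1 b2 (k k' : int) x (r : 'I_(N + 2 * w)) :
  colsubmx w N b1 k = colsubmx w N b2 k' -> supported x (k + 1) N ->
  band_apply w b2 (fun j => x (j - k' + k)) (k' + 1 - w%:Z + r%:Z) =
  band_apply w b1 x (k + 1 - w%:Z + r%:Z).
Proof.
move=> heq hs; apply: eq_bigr => l _.
have -> : k' + 1 - w%:Z + r%:Z - w%:Z + l%:Z - k' + k = k + 1 - w%:Z + r%:Z - w%:Z + l%:Z by ring.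
set j := k + 1 - w%:Z + r%:Z - w%:Z + l%:Z.
have [hj|hj] := boolP (in_window (k + 1) N j); last by rewrite hs // !mulr0.
congr (_ * _).
have hc : (`|(j - (k + 1))%R| < N)%N by move: hj; rewrite /in_window => /andP[h1 h2]; lia.
have := congr1 (fun M : 'M[R[i]]_(N + 2 * w, N) => M r (Ordinal hc)) heq; rewrite /= !mxE.
have er kk : kk + (r%:Z + 1 - w%:Z) = kk + 1 - w%:Z + r%:Z by ring.
have ec kk : kk + ((Ordinal hc : nat)%:Z + 1) = kk + (j - k).
  by move: hj; rewrite /in_window => /andP[h1 h2] /=; lia.
rewrite !er !ec (_ : k + (j - k) = j); last by ring.
by move=> ->; congr (b2 _ _); rewrite /j; ring.
Qed.

Lemma window_test_colsubmx b1 b2 (k k' : int) x (c : R) :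
  colsubmx w N b1 k = colsubmx w N b2 k' -> window_test w b1 x (k + 1) N c ->
  window_test w b2 (fun j => x (j - k' + k)) (k' + 1) N c.
Proof.
move=> heq [hs S0 hc]; set x' := fun j => x (j - k' + k).
have hs' : supported x' (k' + 1) N.
  move=> i hi; apply: hs; move: hi; rewrite /in_window; apply: contra => /andP[h1 h2].
  by apply/andP; split; lia.
have eS : sqnorm x' = sqnorm x.
  rewrite (sqnorm_supported hs) (sqnorm_supported hs'); apply: eq_bigr => j _.
  by rewrite /sqmod /x'; congr (csq (x _)); ring.
have eT : sqnorm (band_apply w b2 x') = sqnorm (band_apply w b1 x).
  rewrite (sqnorm_supported (band_apply_supported b1 hs)).
  rewrite (sqnorm_supported (band_apply_supported b2 hs')).
  by apply: eq_bigr => r _; rewrite /sqmod (band_apply_colsubmx_eq _ heq hs).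
by split; rewrite ?eS ?eT.
Qed.

End ColumnSubmatrices.

Section EntryBounds.
Variable R : realType.
Implicit Types (a b : int -> int -> R[i]).

Lemma band_apply_basis_vec w a (i j : int) : (`|i - j| <= w)%N ->
  band_apply w a (basis_vec j) i = a i j.
Proof.
move=> hij; have hk : (`|(j - i + w%:Z)%R|%N < (2 * w).+1)%N by lia.
rewrite /band_apply (bigD1 (Ordinal hk)) //= big1 => [|l hl].
  have -> : i - w%:Z + (`|(j - i + w%:Z)%R|%N)%:Z = j by lia.
  by rewrite /basis_vec eqxx mulr1 addr0.
rewrite /basis_vec; case: eqP => [h|]; last by rewrite mulr0.
by move/eqP: hl; case; apply/val_inj => /=; lia.
Qed.

Lemma csq_entry_le_op_norm w a (M : R) : bandwidth_le a w -> op_norm_le w a M ->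
  forall i j, csq (a i j) <= M ^+ 2.
Proof.
move=> hb hop i j; have [hij|hij] := ltnP w `|i - j|.
  by rewrite hb // csq0 sqr_ge0.
have [uj1 uj2] := basis_vec_unit R j.
have [hl hn] := hop _ uj1; rewrite uj2 mulr1 in hn.
have : wsum (sqmod (band_apply w a (basis_vec j))) i 1 <= sqnorm (band_apply w a (basis_vec j)).
  exact: wsum_le_sqnorm.
rewrite /wsum big_ord1 addr0 /sqmod band_apply_basis_vec // => /le_trans; apply.
by rewrite sqnorm_l2norm !expr2; apply: ler_pM => //; exact: l2norm_ge0.
Qed.

Lemma csq_minus_scalar_le a (K : R) (lam : R[i]) : (forall i j, csq (a i j) <= K) ->
  forall i j, csq (minus_scalar a lam i j) <= 2 * K + 2 * csq lam.
Proof.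
move=> hK i j; apply: le_trans (csqD_le _ _ ltr01) _.
rewrite invr1 csqN; apply: lerD; apply: ler_wpM2l => //; case: eqP => _ //.
by rewrite csq0 csq_ge0.
Qed.

Lemma colsubmx_minus_scalar w N a b (k k' : int) (lam : R[i]) :
  colsubmx w N a k = colsubmx w N b k' ->
  colsubmx w N (minus_scalar a lam) k = colsubmx w N (minus_scalar b lam) k'.
Proof.
move=> h; apply/matrixP => r c.
have := congr1 (fun M : 'M[R[i]]_(N + 2 * w, N) => M r c) h; rewrite /= !mxE /minus_scalar => ->.
by rewrite !(inj_eq (addrI _)).
Qed.

End EntryBounds.

(** * Localisation and truncation of test vectors *)

Lemma exists_ratio_le (R : realFieldType) n (S T : 'I_n -> R) (c : R) :
  (forall k, 0 <= S k) -> (forall k, 0 <= T k) ->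
  0 < \sum_(k < n) S k -> \sum_(k < n) T k <= c * \sum_(k < n) S k ->
  exists k, 0 < S k /\ T k <= c * S k.
Proof.
move=> S0 T0 Spos hTS; apply: contrapT => hno.
have lt k : 0 < S k -> c * S k < T k.
  by move=> Sk; rewrite ltNge; apply/negP => h; apply: hno; exists k.
have ge k : c * S k <= T k.
  have [Sk|] := ltrP 0 (S k); first exact: ltW (lt _ Sk).
  by rewrite le_eqVlt ltNge S0 orbF => /eqP ->; rewrite mulr0.
have [k Sk] : exists k, 0 < S k.
  apply: contrapT => /forallNP hS; move: Spos; rewrite big1 ?ltxx // => k _.
  by apply/eqP; rewrite eq_le S0 andbT leNgt; apply/negP; exact: hS.
have : \sum_(j < n) (c * S j - T j) < 0.
  rewrite (bigD1 k) //= -[X in _ < X]addr0; apply: ltr_leD; first by rewrite subr_lt0 lt.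
  by apply: sumr_le0 => j _; rewrite subr_le0.
by rewrite sumrB -mulr_sumr subr_lt0 ltNge hTS.
Qed.

Section Localization.
Variables (R : realType) (w : nat) (a : int -> int -> R[i]) (K : R).
Hypothesis csq_entry_le : forall i j, csq (a i j) <= K.
Implicit Types (x : int -> R[i]).

Definition localization_const : R := 2 * (2 * w).+1%:R ^+ 3 * K.

Lemma sum_edge_le (t0 : int) (N T : nat) (i : int) :
  \sum_(k < T) ((edge w (t0 + k%:Z) N i)%:R : R) <= (2 * (2 * w).+1)%:R.
Proof.
rewrite /edge; under eq_bigr => k _ do rewrite natrD [t0 + _ + _]addrAC.
by rewrite big_split /= natrM mulr2n mulrDl mul1r; apply: lerD; exact: sum_window_indicator_le.
Qed.

Lemma sum_sqnorm_cutoff x lo n (N : nat) : supported x lo n ->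
  \sum_(k < n + 2 * w + N) sqnorm (cutoff (lo - w%:Z - N%:Z + k%:Z) N x) = N%:R * sqnorm x.
Proof.
move=> hs; under eq_bigr => k _ do rewrite (sqnorm_supported (cutoff_supported_in _ _ hs)).
rewrite (sqnorm_supported hs) /wsum exchange_big /= mulr_sumr; apply: eq_bigr => i _.
under eq_bigr do rewrite sqmod_cutoff.
have := ltn_ord i => ltin.
by rewrite -mulr_suml sum_window_indicator_eq 1?mulrC //; lia.
Qed.

(* Every row is near an endpoint of at most 2 (2w + 1) of the translated windows. *)
Lemma sum_sqnorm_band_apply_cutoff_le (d : R) x lo n (N : nat) : 0 < d -> supported x lo n ->
  \sum_(k < n + 2 * w + N) sqnorm (band_apply w a (cutoff (lo - w%:Z - N%:Z + k%:Z) N x))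
  <= (1 + d) * N%:R * sqnorm (band_apply w a x) + (1 + d^-1) * localization_const * sqnorm x.
Proof.
move=> d0 hs; set t0 := lo - w%:Z - N%:Z.
have hsb y : supported y lo n -> supported (band_apply w a y) (lo - w%:Z) (n + 2 * w).
  exact: band_apply_supported.
have C0 : 0 <= (2 * w).+1%:R * K by rewrite mulr_ge0 // (entry_bound_ge0 csq_entry_le).
have d1 : 0 <= 1 + d by rewrite addr_ge0 // ltW.
have d2 : 0 <= 1 + d^-1 by rewrite addr_ge0 // invr_ge0 ltW.
under eq_bigr => k _ do rewrite (sqnorm_supported (hsb _ (cutoff_supported_in _ _ hs))).
rewrite (sqnorm_supported (hsb _ hs)) (sqnorm_supported hs).
apply: le_trans (ler_sum _ (fun (k : 'I_(n + 2 * w + N)) _ =>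
  wsum_band_apply_cutoff_le w csq_entry_le (t0 + k%:Z) N x (lo - w%:Z) (n + 2 * w) d0)) _.
rewrite big_split /= -!mulr_sumr; apply: lerD.
  rewrite -mulrA; apply: ler_wpM2l => //; rewrite /wsum exchange_big mulr_sumr /=.
  apply: ler_sum => i _; rewrite -mulr_suml.
  by apply: ler_wpM2r; [exact: sqmod_ge0 | exact: sum_window_indicator_le].
set C := (2 * w).+1%:R * K in C0 *.
have -> : localization_const = C * (2 * (2 * w).+1)%:R * (2 * w).+1%:R.
  by rewrite /localization_const /C natrM; ring.
clearbody C; rewrite -[X in X <= _]mulrA -[X in _ <= X]mulrA; apply: ler_wpM2l => //.
rewrite -!mulrA; apply: ler_wpM2l => //.
apply: le_trans (_ : _ <= (2 * (2 * w).+1)%:R * wsum (band_mass w x) (lo - w%:Z) (n + 2 * w)) _.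
  rewrite /wsum exchange_big mulr_sumr /=; apply: ler_sum => i _; rewrite -mulr_suml.
  by apply: ler_wpM2r; [exact: band_mass_ge0 | exact: sum_edge_le].
apply: ler_wpM2l => //; rewrite -(sqnorm_supported hs).
exact: wsum_band_mass_le (supported_in_l2 hs).
Qed.

Lemma window_test_localize (d c : R) x lo n (N : nat) : 0 < d -> (0 < N)%N ->
  window_test w a x lo n c ->
  exists t, window_test w a (cutoff t N x) t N
    ((1 + d) * c + (1 + d^-1) * localization_const / N%:R).
Proof.
move=> d0 N0 [hs S0 hc].
set c' := (1 + d) * c + _.
pose t k := lo - w%:Z - N%:Z + (k : 'I_(n + 2 * w + N))%:Z.
have Nr : (0 : R) < N%:R by rewrite ltr0n.
have Spos : 0 < \sum_k sqnorm (cutoff (t k) N x) by rewrite sum_sqnorm_cutoff // mulr_gt0.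
have hTS : \sum_k sqnorm (band_apply w a (cutoff (t k) N x)) <=
    c' * \sum_k sqnorm (cutoff (t k) N x).
  apply: le_trans (sum_sqnorm_band_apply_cutoff_le N d0 hs) _.
  rewrite sum_sqnorm_cutoff // /c' [X in _ <= X]mulrDl.
  apply: lerD; last by rewrite mulrA divfK // gt_eqF.
  rewrite -!mulrA; apply: ler_wpM2l; first by rewrite addr_ge0 // ltW.
  by rewrite mulrCA; apply: ler_wpM2l => //; exact: ltW.
have [k [Sk Tk]] := exists_ratio_le (fun k => sqnorm_ge0 _) (fun k => sqnorm_ge0 _) Spos hTS.
by exists (t k); split => //; exact: cutoff_supported.
Qed.

End Localization.

Section Truncation.
Variables (R : realType) (w : nat) (a : int -> int -> R[i]) (K : R).
Hypothesis csq_entry_le : forall i j, csq (a i j) <= K.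
Implicit Types (x : int -> R[i]).

Definition tail (M : nat) x : int -> R :=
  fun j => if in_window (- M%:Z) (2 * M).+1 j then 0 else sqmod x j.

Lemma tail_ge0 M x j : 0 <= tail M x j.
Proof. by rewrite /tail; case: ifP => _ //; exact: sqmod_ge0. Qed.

Lemma sumsq_center_tail x (M : nat) : sumsq x =
  ((wsum (sqmod x) (- M%:Z) (2 * M).+1)%:E + \esum_(i in [set: int]) (tail M x i)%:E)%E.
Proof.
rewrite -esum_wrestr => [|i]; last exact: sqmod_ge0.
rewrite -esumD => [||i _]; last by rewrite lee_fin tail_ge0.
  by apply: eq_esum => i _; rewrite /wrestr /tail -EFinD; case: ifP; rewrite ?addr0 ?add0r.
by move=> i _; rewrite lee_fin wrestr_ge0 // => j; exact: sqmod_ge0.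
Qed.

Lemma l2_tail_small x (eta : R) : in_l2 x -> 0 < eta ->
  exists M : nat, sqnorm x - eta < wsum (sqmod x) (- M%:Z) (2 * M).+1 /\
    forall lo n, wsum (tail M x) lo n <= eta.
Proof.
move=> hx e0.
have h : ((sqnorm x - eta)%:E < sumsq x)%E by rewrite sumsq_sqnorm // lte_fin ltrBlDr ltrDl.
have [_ [F [finF _] <-] hF] := ereal_sup_gt h.
have [M hM] := finite_set_window finF.
have hM1 : sqnorm x - eta < wsum (sqmod x) (- M%:Z) (2 * M).+1.
  by rewrite -lte_fin; apply: lt_le_trans hF (fsbig_le_wsum _ finF hM) => i; exact: sqmod_ge0.
exists M; split => // lo n; rewrite -lee_fin.
apply: le_trans (wsum_le_esum _ _ (tail_ge0 M x)) _.
rewrite leNgt; apply/negP => hlt.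
have : ((wsum (sqmod x) (- M%:Z) (2 * M).+1)%:E + eta%:E <
    (wsum (sqmod x) (- M%:Z) (2 * M).+1)%:E + \esum_(i in [set: int]) (tail M x i)%:E)%E.
  by rewrite lteD2lE.
rewrite -sumsq_center_tail.
by rewrite sumsq_sqnorm // -EFinD lte_fin; move: hM1; lra.
Qed.

Lemma edge_sqmod_le_tail (M m : nat) x (i : int) (l : nat) : (M + 2 * w < m)%N ->
  (l <= 2 * w)%N ->
  (edge w (- m%:Z) (2 * m).+1 i)%:R * sqmod x (i - w%:Z + l%:Z)
  <= 2 * tail M x (i - w%:Z + l%:Z).
Proof.
move=> hm hl; rewrite /edge /tail.
set b1 := in_window _ _ _; set b2 := in_window _ _ _.
have [hb|] := boolP (b1 || b2).
  rewrite ifN; last first.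
    by move: hb; rewrite /b1 /b2 /in_window => /orP[] /andP[h1 h2]; apply/negP => /andP[h3 h4]; lia.
  apply: ler_wpM2r; first exact: sqmod_ge0.
  by move: hb; case: (b1); case: (b2) => // _; rewrite ler_nat.
by rewrite negb_or => /andP[/negbTE -> /negbTE ->]; rewrite mul0r mulr_ge0 // tail_ge0.
Qed.

Lemma sqnorm_band_apply_truncation_le (d eta : R) x (M m : nat) : (M + 2 * w < m)%N ->
  0 < d -> in_l2 x -> (forall lo n, wsum (tail M x) lo n <= eta) ->
  sqnorm (band_apply w a (cutoff (- m%:Z) (2 * m).+1 x)) <=
  (1 + d) * sqnorm (band_apply w a x) +
  (1 + d^-1) * ((2 * w).+1%:R * K) * ((2 * (2 * w).+1)%:R * eta).
Proof.
move=> hm d0 hx htail.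
have C0 : 0 <= (2 * w).+1%:R * K by rewrite mulr_ge0 // (entry_bound_ge0 csq_entry_le).
have hc : supported (cutoff (- m%:Z) (2 * m).+1 x) _ _ := cutoff_supported x.
rewrite (sqnorm_supported (band_apply_supported a hc)).
apply: le_trans (wsum_band_apply_cutoff_le w csq_entry_le _ _ _ _ _ d0) _.
apply: lerD.
  apply: ler_wpM2l; first by rewrite addr_ge0 // ltW.
  apply: le_trans (wsum_le_sqnorm _ _ (proj1 (band_apply_l2 w csq_entry_le hx))).
  by apply: ler_sum => i _; case: in_window; rewrite ?mul1r ?mul0r // sqmod_ge0.
apply: ler_wpM2l; first by rewrite mulr_ge0 // addr_ge0 // invr_ge0 ltW.
apply: (@le_trans _ _ (\sum_(i < (2 * m).+1 + 2 * w) \sum_(l < (2 * w).+1)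
    2 * tail M x (- m%:Z - w%:Z + i%:Z - w%:Z + l%:Z))).
  apply: ler_sum => i _; rewrite /band_mass mulr_sumr; apply: ler_sum => l _.
  exact: edge_sqmod_le_tail hm (ltn_ord l).
rewrite exchange_big /=; under eq_bigr do rewrite -mulr_sumr.
rewrite -mulr_sumr natrM -mulrA; apply: ler_wpM2l => //.
apply: le_trans (_ : _ <= \sum_(l < (2 * w).+1) eta) _; last first.
  by rewrite sumr_const card_ord mulr_natl.
apply: ler_sum => l _; apply: le_trans (htail (- m%:Z - w%:Z - w%:Z + l%:Z) ((2 * m).+1 + 2 * w)).
by rewrite le_eqVlt; apply/orP; left; apply/eqP/eq_bigr => i _; congr tail; ring.
Qed.

Lemma window_test_truncate x (eps : R) : unit_sphere x -> 0 < eps ->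
  exists lo n, window_test w a (cutoff lo n x) lo n (sqnorm (band_apply w a x) + eps).
Proof.
move=> [hx n1] e0.
have nx : sqnorm x = 1 by rewrite sqnorm_l2norm n1 expr1n.
have K0 := entry_bound_ge0 csq_entry_le.
have [_ hrho] := band_apply_l2 w csq_entry_le hx; rewrite nx mulr1 in hrho.
set rho := sqnorm (band_apply w a x) in hrho *.
have rho0 : 0 <= rho := sqnorm_ge0 _.
set P := (2 * w).+1%:R ^+ 2 * K in hrho.
have P0 : 0 <= P by rewrite mulr_ge0 // sqr_ge0.
set d := eps / (4 * (P + 1)).
have d0 : 0 < d by rewrite divr_gt0 // mulr_gt0 // ltr_wpDl.
have dP : d * (P + 1) = eps / 4 by rewrite /d; field; rewrite gt_eqF // ltr_wpDl.
set E := (1 + d^-1) * ((2 * w).+1%:R * K) * (2 * (2 * w).+1)%:R.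
have E0 : 0 <= E by rewrite !mulr_ge0 // addr_ge0 // invr_ge0 ltW.
set eta := eps / (4 * (E + P + eps + 1)).
have eta0 : 0 < eta by rewrite divr_gt0 // mulr_gt0 // ltr_wpDl // !addr_ge0 // ltW.
have etaE : eta * (E + P + eps + 1) = eps / 4.
  by rewrite /eta; field; rewrite gt_eqF // ltr_wpDl // !addr_ge0 // ltW.
have eta1 : eta < 1 by nra.
have [M [hM1 hM2]] := l2_tail_small hx eta0.
set m := (M + 2 * w + 1)%N.
have hm : (M + 2 * w < m)%N by rewrite /m addn1.
exists (- m%:Z), (2 * m).+1.
have Sy : sqnorm (cutoff (- m%:Z) (2 * m).+1 x) = wsum (sqmod x) (- m%:Z) (2 * m).+1.
  rewrite (sqnorm_supported (cutoff_supported x)).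
  by apply: eq_bigr => k _; rewrite sqmod_cutoff in_window_ord mul1r.
have Sy1 : 1 - eta < sqnorm (cutoff (- m%:Z) (2 * m).+1 x).
  rewrite Sy -nx; apply: lt_le_trans hM1 _; apply: wsum_le_window => [i|i]; first exact: sqmod_ge0.
  by rewrite /in_window /m => /andP[h1 h2]; apply/andP; split; lia.
split; [exact: cutoff_supported | by apply: lt_trans Sy1; rewrite subr_gt0 |].
apply: le_trans (sqnorm_band_apply_truncation_le hm d0 hx hM2) _.
rewrite -/rho mulrA -/E.
apply: (@le_trans _ _ ((rho + eps) * (1 - eta))); last first.
  by apply: ler_wpM2l; [rewrite addr_ge0 // ltW | exact: ltW].
have h1 : d * rho <= eps / 4 by rewrite -dP; apply: ler_wpM2l; [exact: ltW | lra].
have h2 : eta * (E + rho + eps) <= eps / 4 by rewrite -etaE; apply: ler_wpM2l; [exact: ltW | lra].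
nra.
Qed.

End Truncation.

(** * Convergence of lower norms *)

Lemma sqrtrD_sqr_le (R : rcfType) (r s : R) : 0 <= r -> 0 <= s ->
  Num.sqrt (r + s ^+ 2) <= Num.sqrt r + s.
Proof.
move=> r0 s0; have h : 0 <= Num.sqrt r + s by rewrite addr_ge0 ?sqrtr_ge0.
rewrite -[X in _ <= X](ger0_norm h) -sqrtr_sqr ler_sqrt ?sqr_ge0 // sqrrD sqr_sqrtr //.
by rewrite -addrA lerD2l lerDr mulrn_wge0 // mulr_ge0 // sqrtr_ge0.
Qed.

Lemma exists_nat_div_le (R : archiRealFieldType) (X e : R) : 0 < e ->
  exists N : nat, (0 < N)%N /\ X / N%:R <= e.
Proof.
move=> e0; exists (Num.truncn (X / e)).+1; split => //.
by rewrite ler_pdivrMr ?ltr0n // -ler_pdivrMl // mulrC; apply/ltW/truncnS_gt.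
Qed.

Section Convergence.
Variables (R : realType) (w : nat).
Implicit Types (a b : int -> int -> R[i]).

Lemma lower_norm_le_of_colsubmx (K e : R) : 0 < e -> exists N : nat,
  forall b1 b2, (forall i j, csq (b1 i j) <= K) -> (forall i j, csq (b2 i j) <= K) ->
  (forall k, exists k', colsubmx w N b1 k = colsubmx w N b2 k') ->
  lower_norm w b2 <= lower_norm w b1 + e.
Proof.
(* Truncation, the distortion d and the window length each cost at most e1. *)
move=> e0; set e1 := (e / 2) ^+ 2 / 3; set P := (2 * w).+1%:R ^+ 2 * K.
set d := e1 / (P + e1).
have e10 : 0 < e1 by rewrite divr_gt0 // exprn_gt0 // divr_gt0.
have [N [N0 hN]] := exists_nat_div_le ((1 + d^-1) * localization_const w K) e10.
exists N => b1 b2 hb1 hb2 hcol.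
have P0 : 0 <= P by rewrite mulr_ge0 ?sqr_ge0 // (entry_bound_ge0 hb1).
have d0 : 0 < d by rewrite divr_gt0 // ltr_wpDl.
have [x [ux hxl]] := lower_norm_adherent w b1 (divr_gt0 e0 (ltr0n _ 2)).
have [_ hrho] := band_apply_l2 w hb1 (proj1 ux).
rewrite [sqnorm x]sqnorm_l2norm (proj2 ux) expr1n mulr1 -/P in hrho.
set rho := sqnorm (band_apply w b1 x) in hrho.
have [lo [n ht]] := window_test_truncate w hb1 ux e10.
have [t hz] := window_test_localize hb1 d0 N0 ht.
have hz1 : window_test w b1 (cutoff t N (cutoff lo n x)) (t - 1 + 1) N (rho + (e / 2) ^+ 2).
  rewrite subrK; apply: window_test_le _ hz; rewrite -/rho.
  have hd : d * (rho + e1) <= e1.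
    by rewrite /d mulrAC ler_pdivrMr ?ltr_wpDl // ler_pM2l // lerD2r.
  by rewrite -mulrA; move: hN hd; rewrite /e1; lra.
have [k' hk'] := hcol (t - 1).
apply: le_trans (lower_norm_le_window_test (window_test_colsubmx hk' hz1)) _.
apply: le_trans (sqrtrD_sqr_le (sqnorm_ge0 _) (ltW (divr_gt0 e0 (ltr0n _ 2)))) _.
rewrite /rho sqnorm_l2norm sqrtr_sqr ger0_norm ?l2norm_ge0 //.
by move: hxl; lra.
Qed.

Lemma colsubmx_of_CN_eq N a b : CN w N a = CN w N b ->
  forall k, exists k', colsubmx w N a k = colsubmx w N b k'.
Proof.
move=> E k; have : CN w N b (colsubmx w N a k) by rewrite -E; exists k.
by case=> k' _ <-; exists k'.
Qed.

Lemma CN_minus_scalar N a b (lam : R[i]) : CN w N a = CN w N b ->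
  CN w N (minus_scalar a lam) = CN w N (minus_scalar b lam).
Proof.
move=> E; apply/seteqP; split => _ [k _ <-].
  have [k' hk'] := colsubmx_of_CN_eq E k.
  by exists k' => //; rewrite -(colsubmx_minus_scalar lam hk').
have [k' hk'] := colsubmx_of_CN_eq (esym E) k.
by exists k' => //; rewrite -(colsubmx_minus_scalar lam hk').
Qed.

Lemma lower_norm_cvg (K : R) B (Bs : nat -> int -> int -> R[i]) :
  (forall i j, csq (B i j) <= K) -> (forall m i j, csq (Bs m i j) <= K) ->
  (forall N : nat, exists m0 : nat, forall m, (m0 <= m)%N -> CN w N (Bs m) = CN w N B) ->
  (fun m => lower_norm w (Bs m)) @ \oo --> lower_norm w B.
Proof.
move=> hB hBs hCN; apply/cvgrPdist_lt => e e0.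
have [N hN] := lower_norm_le_of_colsubmx K (divr_gt0 e0 (ltr0n _ 2)).
have [m0 hm0] := hCN N.
near=> m.
have E : CN w N (Bs m) = CN w N B by apply: hm0; near: m; exists m0.
have h1 := hN _ _ (hBs m) hB (colsubmx_of_CN_eq E).
have h2 := hN _ _ hB (hBs m) (colsubmx_of_CN_eq (esym E)).
by rewrite ltr_norml; apply/andP; split; lra.
Unshelve. all: by end_near.
Qed.

End Convergence.

Theorem proposition4p9 (R : realType) (w : nat) (A : int -> int -> R[i])
  (As : nat -> int -> int -> R[i]) :
  is_band w A ->
  (forall m, is_band w (As m)) ->
  (exists M : R, forall m, op_norm_le w (As m) M) ->
  (forall N : nat, exists m0 : nat, forall m, (m0 <= m)%N -> CN w N (As m) = CN w N A) ->
  ((fun m => lower_norm w (As m)) @ \oo --> lower_norm w A) /\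
  (forall lam : R[i],
     (fun m => lower_norm w (minus_scalar (As m) lam)) @ \oo --> lower_norm w (minus_scalar A lam)).
Proof.
move=> [hbA [MA hA]] hAs [M hM] hCN.
set K := MA ^+ 2 + M ^+ 2.
have KA i j : csq (A i j) <= K.
  by apply: le_trans (csq_entry_le_op_norm hbA hA i j) _; rewrite lerDl sqr_ge0.
have KAs m i j : csq (As m i j) <= K.
  by apply: le_trans (csq_entry_le_op_norm (proj1 (hAs m)) (hM m) i j) _; rewrite lerDr sqr_ge0.
split; first exact: lower_norm_cvg KA KAs hCN.
move=> lam; apply: lower_norm_cvg (csq_minus_scalar_le lam KA)
  (fun m => csq_minus_scalar_le lam (KAs m)) _.
by move=> N; have [m0 h] := hCN N; exists m0 => m /h; exact: CN_minus_scalar.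
Qed.
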